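(* Let $\mathcal{G}_N$ (the Newton group) be the group of transformations of $\mathbb{R}^4=\mathbb{R}^3\times\mathbb{R}$ of the form $(\mathbf{x},x^4)\mapsto(S\mathbf{x},x^4)+b$ with $S\in SO(3)$ and $b\in\mathbb{R}^4$. An equivalence relation on $\mathbb{R}^4$ is $\mathcal{G}_N$-invariant if and only if there is an additive subgroup $H$ of $\mathbb{R}$ such that either (i) the equivalence class of every $x$ is $[x]=x+(\{\mathbf{0}\}\times H)$, or (ii) the equivalence class of every $x$ is $[x]=x+(\mathbb{R}^3\times H)$.
   Context: An equivalence relation $\sim$ on $\mathbb{R}^4$ is $\mathcal{G}_N$-invariant if $x\sim y$ implies $g(x)\sim g(y)$ for all $x,y$ and all $g\in\mathcal{G}_N$. *)

From HB Require Import structures.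
From mathcomp Require Import all_boot all_order all_algebra.
From mathcomp Require Import reals.
Global Set Implicit Arguments. Global Unset Strict Implicit.
Import Order.TTheory GRing.Theory Num.Theory.
Local Open Scope ring_scope.

Definition pt (R : realType) := ('cV[R]_3 * R)%type.

Definition SO3 {R : realType} (S : 'M[R]_3) : Prop :=
  S^T *m S = 1%:M /\ \det S = 1.

Definition newton_map {R : realType} (S : 'M[R]_3) (b : pt R) (p : pt R) : pt R :=
  (S *m p.1 + b.1, p.2 + b.2).

Definition is_equivalence_R4 {R : realType} (r : pt R -> pt R -> Prop) : Prop :=
  (forall x, r x x) /\ (forall x y, r x y -> r y x) /\
  (forall x y z, r x y -> r y z -> r x z).

Definition GN_invariant {R : realType} (r : pt R -> pt R -> Prop) : Prop :=
  forall S b, SO3 S -> forall x y, r x y -> r (newton_map S b x) (newton_map S b y).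

Definition additive_subgroup {R : realType} (H : R -> Prop) : Prop :=
  H 0 /\ (forall a c, H a -> H c -> H (a - c)).

From HB Require Import structures.
From mathcomp Require Import all_boot all_order all_algebra.
From mathcomp Require Import reals.
From mathcomp Require Import ring lra.
From Stdlib Require Import Classical_Prop.
Import Order.TTheory GRing.Theory Num.Theory.
Local Open Scope ring_scope.

(** By translation invariance, [x ~ y] iff [y - x] lies in the class [K] of
   the origin, and [K] is an additive subgroup of [R^3 x R] stable under the
   rotations [(v, t) |-> (S v, t)].  If some [(v, t)] in [K] has [v <> 0], then
   [K] contains a nonzero [(S v - v, 0)], and the spatial part
   [V = {w | (w, 0) in K}] is a nonzero rotation-invariant subgroup of [R^3].
   Adding the images of [s e1] under the rotations by [+-theta] about the
   z-axis puts [2 s cos(theta) e1] in [V], which by the archimedean property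
   yields the whole x-axis and then, rotating, all of [R^3]; this is case (ii).
   Otherwise every element of [K] has spatial part [0]; this is case (i).  In
   both cases [H = {t | (0, t) in K}]. *)

Section ColumnVectors3.
Variable R : comRingType.

Definition mx33 (a b c d e f g h i : R) : 'M[R]_3 :=
  \matrix_(k, l) nth 0 [:: a; b; c; d; e; f; g; h; i] (3 * k + l).

Definition v3 (x y z : R) : 'cV[R]_3 := \col_k nth 0 [:: x; y; z] k.

Definition rot_z (c s : R) := mx33 c (- s) 0 s c 0 0 0 1.
Definition rot_y (c s : R) := mx33 c 0 s 0 1 0 (- s) 0 c.

Lemma v3E (u : 'cV[R]_3) : u = v3 (u 0 0) (u 1 0) (u 2 0).
Proof.
apply/matrixP => i j; rewrite !mxE (ord1 j).
by case: i => [[|[|[|?]]] ?] //=; congr (u _ _); apply: val_inj.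
Qed.

Lemma v3_0 : v3 0 0 0 = 0.
Proof. by apply/matrixP => i j; rewrite !mxE; case: i => [[|[|[|?]]] ?]. Qed.

Lemma v3D x y z x' y' z' : v3 x y z + v3 x' y' z' = v3 (x + x') (y + y') (z + z').
Proof. by apply/matrixP => i j; rewrite !mxE; case: i => [[|[|[|?]]] ?]. Qed.

Lemma v3N x y z : - v3 x y z = v3 (- x) (- y) (- z).
Proof. by apply/matrixP => i j; rewrite !mxE; case: i => [[|[|[|?]]] ?]. Qed.

Lemma v3Mn x y z n : v3 x y z *+ n = v3 (x *+ n) (y *+ n) (z *+ n).
Proof. by elim: n => [|n IH]; rewrite ?mulr0n ?v3_0 // !mulrS IH v3D. Qed.

Lemma v3_inj x y z x' y' z' :
  v3 x y z = v3 x' y' z' -> [/\ x = x', y = y' & z = z'].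
Proof. by move/matrixP => h; have := h 0 0; have := h 1 0; have := h 2 0; rewrite !mxE. Qed.

Lemma v3_congr (P : 'cV[R]_3 -> Prop) x y z x' y' z' :
  P (v3 x y z) -> x = x' -> y = y' -> z = z' -> P (v3 x' y' z').
Proof. by move=> h <- <- <-. Qed.

Lemma det_mx33 (a b c d e f g h i : R) : \det (mx33 a b c d e f g h i) =
  a * (e * i - f * h) - b * (d * i - f * g) + c * (d * h - e * g).
Proof.
rewrite (expand_det_row _ 0) !big_ord_recr big_ord0 /= /cofactor.
rewrite !(expand_det_row _ 0) !big_ord_recr !big_ord0 /= /cofactor.
by rewrite !det_mx11 !mxE /= !expr0 !expr1 /=; ring.
Qed.

Lemma rot_z_v3 c s x y z :
  rot_z c s *m v3 x y z = v3 (c * x - s * y) (s * x + c * y) z.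
Proof.
apply/matrixP => i j; rewrite !mxE !big_ord_recr big_ord0 /= !mxE /=.
by case: i => [[|[|[|?]]] ?] //=; ring.
Qed.

Lemma rot_y_v3 c s x y z :
  rot_y c s *m v3 x y z = v3 (c * x + s * z) y (c * z - s * x).
Proof.
apply/matrixP => i j; rewrite !mxE !big_ord_recr big_ord0 /= !mxE /=.
by case: i => [[|[|[|?]]] ?] //=; ring.
Qed.

End ColumnVectors3.

Section Rotations.
Variable R : realType.

Lemma SO3_1 : SO3 (1%:M : 'M[R]_3).
Proof. by split; rewrite ?trmx1 ?mul1mx ?det1. Qed.

Lemma rot_z_SO3 (c s : R) : c ^+ 2 + s ^+ 2 = 1 -> SO3 (rot_z c s).
Proof.
move=> hcs; split.
  apply/matrixP => i j; rewrite !mxE !big_ord_recr big_ord0 /= !mxE /=.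
  by case: i => [[|[|[|?]]] ?] //=; case: j => [[|[|[|?]]] ?] //=; nra.
by rewrite det_mx33 -[RHS]hcs; ring.
Qed.

Lemma rot_y_SO3 (c s : R) : c ^+ 2 + s ^+ 2 = 1 -> SO3 (rot_y c s).
Proof.
move=> hcs; split.
  apply/matrixP => i j; rewrite !mxE !big_ord_recr big_ord0 /= !mxE /=.
  by case: i => [[|[|[|?]]] ?] //=; case: j => [[|[|[|?]]] ?] //=; nra.
by rewrite det_mx33 -[RHS]hcs; ring.
Qed.

Lemma rot_z_pi_SO3 : SO3 (rot_z (-1 : R) 0).
Proof. by apply: rot_z_SO3; rewrite sqrrN expr1n expr0n addr0. Qed.

Lemma rot_y_pi_SO3 : SO3 (rot_y (-1 : R) 0).
Proof. by apply: rot_y_SO3; rewrite sqrrN expr1n expr0n addr0. Qed.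

Lemma rot_pi_fixed (u : 'cV[R]_3) :
  rot_z (-1) 0 *m u = u -> rot_y (-1) 0 *m u = u -> u = 0.
Proof.
rewrite [u]v3E rot_z_v3 rot_y_v3 => /v3_inj[hx hy _] /v3_inj[_ _ hz].
by rewrite -v3_0; congr v3; lra.
Qed.

End Rotations.

Section RotationInvariantSubgroup.
Variables (R : realType) (V : 'cV[R]_3 -> Prop).
Hypothesis V0 : V 0.
Hypothesis VB : forall u w, V u -> V w -> V (u - w).
Hypothesis VR : forall S u, SO3 S -> V u -> V (S *m u).

Lemma VN u : V u -> V (- u).
Proof. by move=> hu; rewrite -sub0r; apply: VB. Qed.

Lemma VD u w : V u -> V w -> V (u + w).
Proof. by move=> hu hw; rewrite -[w]opprK; apply/VB/VN. Qed.

Lemma VMn u n : V u -> V (u *+ n).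
Proof. by move=> hu; elim: n => [|n IH]; rewrite ?mulr0n // mulrS; apply: VD. Qed.

Lemma V_x_axis s : s != 0 -> V (v3 s 0 0) -> forall x, V (v3 x 0 0).
Proof.
move=> s0 hs.
have chord t : -1 <= t <= 1 -> V (v3 (t * s *+ 2) 0 0).
  move=> /andP[t_ge t_le]; set c := Num.sqrt (1 - t ^+ 2).
  have c2 : c ^+ 2 = 1 - t ^+ 2 by rewrite sqr_sqrtr // subr_ge0; nra.
  have hc : t ^+ 2 + c ^+ 2 = 1 by rewrite c2; ring.
  have hc' : t ^+ 2 + (- c) ^+ 2 = 1 by rewrite sqrrN.
  have := VD (VR (rot_z_SO3 hc) hs) (VR (rot_z_SO3 hc') hs).
  by rewrite !rot_z_v3 v3D => h; apply: (v3_congr h); ring.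
move=> x; set q := x / (s *+ 2); set n := Num.bound `|q|.
have hn : `|q| < n%:R by apply: archi_boundP.
have n0 : n%:R != 0 :> R by rewrite gt_eqF // (le_lt_trans _ hn).
have ht : -1 <= q / n%:R <= 1.
  rewrite -ler_norml normrM normfV normr_nat ler_pdivrMr ?mul1r ?ltW //.
have := VMn n (chord _ ht); rewrite v3Mn => h.
apply: (v3_congr h); rewrite ?mul0rn //.
rewrite /q -[LHS]mulr_natr !mulr2n; field.
by rewrite n0 -mulr2n mulrn_eq0.
Qed.

Lemma V_full u : u != 0 -> V u -> forall w, V w.
Proof.
move=> u0 hu.
(* Half-turns isolate the coordinates of [u]; quarter-turns move the axes. *)
have quarter_turn : (0 : R) ^+ 2 + 1 ^+ 2 = 1 by rewrite expr0n expr1n add0r.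
have quarter_turn' : (0 : R) ^+ 2 + (-1) ^+ 2 = 1 by rewrite sqrrN.
have [s s0 hs] : exists2 s, s != 0 & V (v3 s 0 0).
  move: u0 hu; rewrite [u]v3E; move: (u 0 0) (u 1 0) (u 2 0) => a b c u0 hu.
  have hz := VR (rot_z_pi_SO3 R) hu; have hy := VR (rot_y_pi_SO3 R) hu.
  rewrite rot_z_v3 in hz; rewrite rot_y_v3 in hy.
  have [a0|a0] := eqVneq a 0; last first.
    exists (a *+ 2); first by rewrite mulrn_eq0.
    by have := VN (VD hz hy); rewrite v3D v3N => h; apply: (v3_congr h); ring.
  have [b0|b0] := eqVneq b 0; last first.
    exists (- b *+ 2); first by rewrite mulrn_eq0 oppr_eq0.
    have := VR (rot_z_SO3 quarter_turn) (VD hu hy); rewrite v3D rot_z_v3 => h.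
    by apply: (v3_congr h); ring.
  have [c0|c0] := eqVneq c 0; last first.
    exists (c *+ 2); first by rewrite mulrn_eq0.
    have := VR (rot_y_SO3 quarter_turn) (VD hu hz); rewrite v3D rot_y_v3 => h.
    by apply: (v3_congr h); ring.
  by move: u0; rewrite a0 b0 c0 v3_0 eqxx.
have line := V_x_axis s0 hs.
move=> w; rewrite [w]v3E; move: (w 0 0) (w 1 0) (w 2 0) => x y z.
have hy := VR (rot_z_SO3 quarter_turn) (line y); have hz := VR (rot_y_SO3 quarter_turn') (line z).
rewrite rot_z_v3 in hy; rewrite rot_y_v3 in hz.
by have := VD (VD (line x) hy) hz; rewrite !v3D => h; apply: (v3_congr h); ring.
Qed.

End RotationInvariantSubgroup.

Lemma pairB (U V : zmodType) (a c : U) (b d : V) : (a, b) - (c, d) = (a - c, b - d).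
Proof. by []. Qed.

Section InvariantRelation.
Variables (R : realType) (r : pt R -> pt R -> Prop).
Hypothesis r_equiv : is_equivalence_R4 r.
Hypothesis r_inv : GN_invariant r.

Lemma r_translate b x y : r x y -> r (x + b) (y + b).
Proof. by move=> /(r_inv b (SO3_1 R)); rewrite /newton_map !mul1mx. Qed.

Lemma r_class0E x y : r x y <-> r 0 (y - x).
Proof.
by split=> [/(r_translate (- x))|/(r_translate x)]; rewrite ?subrr ?add0r ?subrK.
Qed.

Lemma class0B p q : r 0 p -> r 0 q -> r 0 (p - q).
Proof.
have [_ [r_sym r_trans]] := r_equiv.
by move=> hp hq; apply/(r_class0E q p); apply: r_trans (r_sym _ _ hq) hp.
Qed.

Lemma class0_rot S p : SO3 S -> r 0 p -> r 0 (S *m p.1, p.2).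
Proof. by move=> hS /(r_inv 0 hS); rewrite /newton_map /= mulmx0 !addr0. Qed.

Lemma class0_spatial p : r 0 p -> p.1 != 0 -> forall w, r 0 (w, 0).
Proof.
move=> hp p1.
have V0 : r 0 (0, 0) by case: r_equiv.
have VB u w : r 0 (u, 0) -> r 0 (w, 0) -> r 0 (u - w, 0).
  by move=> hu hw; have := class0B hu hw; rewrite pairB subrr.
have VR S u : SO3 S -> r 0 (u, 0) -> r 0 (S *m u, 0) by move=> hS /(class0_rot hS).
have VS S : SO3 S -> r 0 (S *m p.1 - p.1, 0).
  by move=> hS; have := class0B (class0_rot hS hp) hp; rewrite pairB subrr.
have total := V_full V0 VB VR.
have [hz|hz] := eqVneq (rot_z (-1) 0 *m p.1) p.1; last first.
  by apply: total (VS _ (rot_z_pi_SO3 R)); rewrite subr_eq0.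
have [hy|hy] := eqVneq (rot_y (-1) 0 *m p.1) p.1; last first.
  by apply: total (VS _ (rot_y_pi_SO3 R)); rewrite subr_eq0.
by move: p1; rewrite (rot_pi_fixed hz hy) eqxx.
Qed.

Lemma GN_invariant_classes : exists H : R -> Prop, additive_subgroup H /\
  ((forall x y : pt R, r x y <-> (y.1 = x.1 /\ H (y.2 - x.2))) \/
   (forall x y : pt R, r x y <-> H (y.2 - x.2))).
Proof.
exists (fun t => r 0 (0, t)); split.
  split; first by case: r_equiv.
  by move=> a c ha hc; have := class0B ha hc; rewrite pairB subrr.
have [[p [hp p1]] | none] := classic (exists p, r 0 p /\ p.1 != 0).
  right => [[x1 x2] [y1 y2]]; rewrite r_class0E pairB.
  have total := class0_spatial hp p1.
  split => h.
    by have := class0B h (total (y1 - x1)); rewrite pairB !subrr subr0.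
  by have := class0B h (total (x1 - y1)); rewrite pairB sub0r opprB subr0.
have spatial0 q : r 0 q -> q.1 = 0.
  by move=> hq; apply/eqP; apply: contra_notT none => q1; exists q.
left => [[x1 x2] [y1 y2]]; rewrite r_class0E pairB /=; split.
  move=> h; have /= e := spatial0 _ h.
  by move: h; rewrite e; split => //; apply: subr0_eq.
by move=> [-> h]; rewrite subrr.
Qed.

End InvariantRelation.

Lemma classes_GN_invariant (R : realType) (r : pt R -> pt R -> Prop) (H : R -> Prop) :
  ((forall x y : pt R, r x y <-> (y.1 = x.1 /\ H (y.2 - x.2))) \/
   (forall x y : pt R, r x y <-> H (y.2 - x.2))) -> GN_invariant r.
Proof.
have shift (a b c : R) : a + c - (b + c) = a - b by rewrite opprD addrACA subrr addr0.
move=> [hc|hc] S b hS x y /hc hxy; apply/hc; rewrite /newton_map /= shift //.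
by case: hxy => -> h.
Qed.

Theorem theorem3p3 (R : realType) (r : pt R -> pt R -> Prop) :
  is_equivalence_R4 r ->
  (GN_invariant r <->
   exists H : R -> Prop, additive_subgroup H /\
     ((forall x y : pt R, r x y <-> (y.1 = x.1 /\ H (y.2 - x.2))) \/
      (forall x y : pt R, r x y <-> H (y.2 - x.2)))).
Proof.
move=> r_equiv; split; first exact: GN_invariant_classes.
by move=> [H [_ classes]]; apply: classes_GN_invariant classes.
Qed.
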